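(* Let $n\ge3$ and let $A(z_1,\dots,z_n)=\sum_{i=1}^n[z_i,z_{i+1}]$ on the space of plane $n$-gons. Every level hypersurface $\{A=a\}$ with $a\neq0$ is smooth, and the dual Birkhoff distribution $\mathcal F$ is tangent to these hypersurfaces.
   Context: $[\cdot,\cdot]$ is the determinant of two plane vectors; indices are cyclic. The function $A$ is twice the (signed) area of the polygon. $G_n$ is the set of $n$-gons $(z_1,\dots,z_n)\in(\mathbb R^2)^n$ with $z_i\ne z_{i+1}$ for all $i$. The dual Birkhoff distribution $\mathcal F$ on $G_n$: a tangent vector $W=(w_1,\dots,w_n)$ (velocities of the vertices) lies in $\mathcal F$ iff for each $i$ the induced motion of the line $z_iz_{i+1}$ is an infinitesimal rotation about the midpoint of $z_iz_{i+1}$; equivalently $[w_i+w_{i+1},z_{i+1}-z_i]=0$ for all $i$. *)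

From HB Require Import structures.
From mathcomp Require Import all_boot all_order all_algebra.
From mathcomp Require Import all_classical all_reals all_analysis.
Set Implicit Arguments. Unset Strict Implicit. Unset Printing Implicit Defensive.
Import Order.TTheory GRing.Theory Num.Theory.
Import numFieldNormedType.Exports.
Local Open Scope ring_scope.

(* A plane n-gon (z_1,...,z_n) is an n x 2 real matrix whose i-th row is z_i.
   Indices are cyclic: the successor of i : 'I_n is ordS i (= (i+1) mod n). *)

Definition det2 (R : ringType) (u v : 'rV[R]_2) : R :=
  u ord0 ord0 * v ord0 ord_max - u ord0 ord_max * v ord0 ord0.

Definition vert (R : ringType) (n : nat) (z : 'M[R]_(n, 2)) (i : 'I_n) : 'rV[R]_2 :=
  row i z.

Definition Area (R : ringType) (n : nat) (z : 'M[R]_(n, 2)) : R :=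
  \sum_(i < n) det2 (vert z i) (vert z (ordS i)).

Definition in_Gn (R : ringType) (n : nat) (z : 'M[R]_(n, 2)) : Prop :=
  forall i : 'I_n, vert z i != vert z (ordS i).

Definition in_dualBirkhoff (R : ringType) (n : nat) (z W : 'M[R]_(n, 2)) : Prop :=
  forall i : 'I_n,
    det2 (vert W i + vert W (ordS i)) (vert z (ordS i) - vert z i) = 0.

(* A is a quadratic form, so by Euler's identity dA_z(z) = 2 A(z) = 2a, which
   is nonzero: a is a regular value.  Expanding the relation
   [w_i + w_{i+1}, z_{i+1} - z_i] = 0 by bilinearity gives the i-th term of
   dA_z(W) plus [w_{i+1}, z_{i+1}] - [w_i, z_i]; the latter telescopes to 0
   around the polygon, so summing the relations gives dA_z(W) = 0. *)
From HB Require Import structures.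
From mathcomp Require Import all_boot all_order all_algebra.
From mathcomp Require Import all_classical all_reals all_analysis.
From mathcomp Require Import ring.
Import Order.TTheory GRing.Theory Num.Theory.
Import numFieldNormedType.Exports.
Local Open Scope ring_scope.

Lemma sumr_ordS_sub (V : zmodType) n (g : 'I_n -> V) :
  \sum_(i < n) (g (ordS i) - g i) = 0.
Proof.
by rewrite sumrB [X in _ - X](reindex_inj (@ordS_inj n)) subrr.
Qed.

Lemma det2DB (R : comNzRingType) (u u' v v' : 'rV[R]_2) :
  det2 (u + u') (v' - v) = det2 u v' + det2 v u' + (det2 u' v' - det2 u v).
Proof. by rewrite /det2 !mxE; ring. Qed.

Section AreaDifferential.
Variable R : realType.

Lemma is_diff_entry m n (M : 'M[R]_(m, n)) i j :
  is_diff M (fun N : 'M[R]_(m, n) => N i j) (fun N => N i j).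
Proof.
have entry_linear : linear (fun N : 'M[R]_(m, n) => N i j).
  by move=> k A B; rewrite !mxE.
pose entry : {linear 'M[R]_(m, n) -> R} :=
  HB.pack (fun N : 'M[R]_(m, n) => N i j)
    (GRing.isLinear.Build _ _ _ _ _ entry_linear).
apply: DiffDef; first exact: differentiable_coord.
exact: (@diff_lin _ _ _ entry M (@coord_continuous _ m n i j)).
Qed.

Lemma is_diff_sum (V W : normedModType R) k (f df : 'I_k -> V -> W) x :
  (forall i, is_diff x (f i) (df i)) ->
  is_diff x (fun y => \sum_i f i y) (fun y => \sum_i df i y).
Proof.
move=> f_diff; rewrite -!fct_sumE.
elim/big_rec2: _ => [|i g dg _ g_diff]; first exact: is_diff_cst.
exact: is_diffD.
Qed.

Lemma is_diff_det2_rows n (z : 'M[R]_(n, 2)) i j :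
  is_diff z (fun N => det2 (vert N i) (vert N j))
    (fun W => det2 (vert W i) (vert z j) + det2 (vert z i) (vert W j)).
Proof.
have -> : (fun N => det2 (vert N i) (vert N j)) =
    (fun N : 'M[R]_(n, 2) => N i ord0 * N j ord_max - N i ord_max * N j ord0).
  by apply/funext => N; rewrite /det2 /vert !mxE.
apply: is_diff_eq; first by apply: is_diffB; apply: is_diffM; apply: is_diff_entry.
by apply/funext => W; rewrite /det2 /vert !fctE !mxE /GRing.scale /=; ring.
Qed.

Definition dArea {n} (z W : 'M[R]_(n, 2)) : R :=
  \sum_(i < n)
    (det2 (vert W i) (vert z (ordS i)) + det2 (vert z i) (vert W (ordS i))).

Lemma is_diff_Area {n} (z : 'M[R]_(n, 2)) : is_diff z (@Area R n) (dArea z).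
Proof. by apply: is_diff_sum => i; apply: is_diff_det2_rows. Qed.

Lemma dArea_self n (z : 'M[R]_(n, 2)) : dArea z z = 2 * Area z.
Proof.
rewrite /dArea /Area mulr_sumr; apply: eq_bigr => i _.
by rewrite mulr2n mulrDl mul1r.
Qed.

Lemma dArea_dualBirkhoff n (z W : 'M[R]_(n, 2)) :
  in_dualBirkhoff z W -> dArea z W = 0.
Proof.
move=> zW; have : \sum_(i < n) det2 (vert W i + vert W (ordS i))
                               (vert z (ordS i) - vert z i) = 0.
  by rewrite big1 // => i _; apply: zW.
under eq_bigr do rewrite det2DB.
by rewrite big_split /= sumr_ordS_sub addr0.
Qed.

End AreaDifferential.

Theorem lemma2p3 (R : realType) (n : nat) (hn : (3 <= n)%N) (a : R) (ha : a != 0) :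
  forall z : 'M[R]_(n, 2), in_Gn z -> Area z = a ->
    [/\ differentiable (@Area R n) z,
        (exists W : 'M[R]_(n, 2), 'd (@Area R n) z W != 0)
      & (forall W : 'M[R]_(n, 2), in_dualBirkhoff z W -> 'd (@Area R n) z W = 0)].
Proof.
move=> z _ Az; have Adiff := is_diff_Area R z.
have dAz : 'd (@Area R n) z = @dArea R n z :> (_ -> _) by exact: diff_val.
split.
- exact: ex_diff.
- by exists z; rewrite dAz dArea_self Az mulf_neq0 // pnatr_eq0.
- by move=> W /dArea_dualBirkhoff; rewrite dAz.
Qed.
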